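(* Let $(A,R)$, $(B,S)$ be uniform preorders, $f:(A,R)\to(B,S)$ a monotone map, and $g:B\to A$ a function. The following are equivalent: (i) $g$ is a monotone map $(B,S)\to(A,R)$ and is right adjoint to $f$ in $\mathsf{UOrd}$ (i.e. $\mathrm{id}_A\le g\circ f$ and $f\circ g\le \mathrm{id}_B$); (ii) (1) the relation $\{(f(g(b)),b)\mid b\in B\}$ is in $S$, and (2) for all $s\in S$ the relation $s^*=\{(a,gb)\mid (fa,b)\in s\}$ is in $R$. Moreover, if $S_0\subseteq S$ is a basis of $S$, then it suffices to verify condition (2) for $s\in S_0$.
   Context: A uniform preorder is a pair $(A,R)$ with $A$ a set and $R\subseteq P(A\times A)$ such that $\mathrm{id}_A\in R$, $s\circ r\in R$ whenever $r,s\in R$, and $s\in R$ whenever $r\in R$ and $s\subseteq r$. A monotone map $f:(A,R)\to(B,S)$ is a function $f:A\to B$ with $\{(fa,fa')\mid (a,a')\in r\}\in S$ for all $r\in R$; for monotone $f,g:(A,R)\to(B,S)$ one sets $f\le g$ iff $\{(fa,ga)\mid a\in A\}\in S$. This defines the locally ordered category $\mathsf{UOrd}$. A basis of $(B,S)$ is a subset $S_0\subseteq S$ such that every $s\in S$ is contained in some $s_0\in S_0$. *)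

Definition relation (A : Type) := A -> A -> Prop.

Definition id_rel {A : Type} : relation A := fun a a' => a = a'.

(* s o r : first r, then s *)
Definition comp_rel {A : Type} (s r : relation A) : relation A :=
  fun a c => exists b, r a b /\ s b c.

Definition subrel {A : Type} (s r : relation A) : Prop :=
  forall a a', s a a' -> r a a'.

Definition uniform_preorder {A : Type} (R : relation A -> Prop) : Prop :=
  R id_rel /\
  (forall r s, R r -> R s -> R (comp_rel s r)) /\
  (forall r s, R r -> subrel s r -> R s).

Definition img_rel {A B : Type} (f : A -> B) (r : relation A) : relation B :=
  fun b b' => exists a a', r a a' /\ f a = b /\ f a' = b'.

Definition monotone {A B : Type} (R : relation A -> Prop) (S : relation B -> Prop)
  (f : A -> B) : Prop :=
  forall r, R r -> S (img_rel f r).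

Definition le_map {A B : Type} (S : relation B -> Prop) (f g : A -> B) : Prop :=
  S (fun b b' => exists a, f a = b /\ g a = b').

Definition is_basis {B : Type} (S S0 : relation B -> Prop) : Prop :=
  (forall s, S0 s -> S s) /\
  (forall s, S s -> exists s0, S0 s0 /\ subrel s s0).

Definition star_rel {A B : Type} (f : A -> B) (g : B -> A) (s : relation B)
  : relation A :=
  fun a a' => exists a0 b, s (f a0) b /\ a = a0 /\ a' = g b.


(* The unit [{(a, gfa)}] and counit [{(fgb, b)}] mediate between [s^*] and
   the image [g(s)]: [s^* ⊆ g(s) ∘ unit] and [g(s) ⊆ (s ∘ counit)^*], while
   [unit ⊆ id^*].  Closure under composition and subsets turns these
   inclusions into the two implications; for a basis, [s ⊆ s0] gives
   [s^* ⊆ s0^*]. *)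

Definition unit_rel {A B : Type} (f : A -> B) (g : B -> A) : relation A :=
  fun a a' => exists a0, a0 = a /\ g (f a0) = a'.

Definition counit_rel {A B : Type} (f : A -> B) (g : B -> A) : relation B :=
  fun b b' => exists b0, f (g b0) = b /\ b0 = b'.

Section Adjunction.

Context {A B : Type} {R : relation A -> Prop} {S : relation B -> Prop}.
Context {f : A -> B} {g : B -> A}.

Lemma star_rel_subrel (s s' : relation B) :
  subrel s s' -> subrel (star_rel f g s) (star_rel f g s').
Proof.
  intros Hss' a a' [a0 [b [Hs [-> ->]]]].
  exists a0, b. auto.
Qed.

Lemma unit_rel_sub_star_id : subrel (unit_rel f g) (star_rel f g id_rel).
Proof.
  intros a a' [a0 [<- <-]].
  exists a0, (f a0). repeat split.
Qed.

Lemma star_rel_sub_comp_unit (s : relation B) :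
  subrel (star_rel f g s) (comp_rel (img_rel g s) (unit_rel f g)).
Proof.
  intros a a' [a0 [b [Hs [-> ->]]]].
  exists (g (f a0)). split.
  - exists a0. auto.
  - exists (f a0), b. auto.
Qed.

Lemma img_rel_sub_star_comp_counit (s : relation B) :
  subrel (img_rel g s) (star_rel f g (comp_rel s (counit_rel f g))).
Proof.
  intros a a' [b1 [b2 [Hs [<- <-]]]].
  exists (g b1), b2. split; [|auto].
  exists b1. split; [exists b1; auto | exact Hs].
Qed.

Hypothesis R_down : forall r s, R r -> subrel s r -> R s.

Lemma star_rel_closed_of_basis {S0 : relation B -> Prop} :
  is_basis S S0 ->
  (forall s, S0 s -> R (star_rel f g s)) -> forall s, S s -> R (star_rel f g s).
Proof.
  intros [_ HS_S0] Hstar s Hs.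
  destruct (HS_S0 s Hs) as [s0 [Hs0 Hss0]].
  exact (R_down _ _ (Hstar s0 Hs0) (star_rel_subrel _ _ Hss0)).
Qed.

Lemma unit_rel_of_star_rel_closed :
  S id_rel -> (forall s, S s -> R (star_rel f g s)) -> R (unit_rel f g).
Proof.
  intros S_id Hstar.
  exact (R_down _ _ (Hstar _ S_id) unit_rel_sub_star_id).
Qed.

Hypothesis R_comp : forall r s, R r -> R s -> R (comp_rel s r).

Lemma star_rel_closed_of_monotone :
  monotone S R g -> R (unit_rel f g) -> forall s, S s -> R (star_rel f g s).
Proof.
  intros Hg Hunit s Hs.
  exact (R_down _ _ (R_comp _ _ Hunit (Hg s Hs)) (star_rel_sub_comp_unit s)).
Qed.

Hypothesis S_comp : forall r s, S r -> S s -> S (comp_rel s r).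

Lemma monotone_of_star_rel_closed :
  S (counit_rel f g) -> (forall s, S s -> R (star_rel f g s)) -> monotone S R g.
Proof.
  intros Hcounit Hstar s Hs.
  exact (R_down _ _ (Hstar _ (S_comp _ _ Hcounit Hs))
           (img_rel_sub_star_comp_counit s)).
Qed.

End Adjunction.

Theorem lemma2p1 (A B : Type) (R : relation A -> Prop) (S : relation B -> Prop)
  (f : A -> B) (g : B -> A) :
  uniform_preorder R -> uniform_preorder S -> monotone R S f ->
  ((monotone S R g /\ le_map R (fun a => a) (fun a => g (f a))
                   /\ le_map S (fun b => f (g b)) (fun b => b))
   <->
   (S (fun b b' => exists b0, f (g b0) = b /\ b0 = b') /\
    (forall s, S s -> R (star_rel f g s))))
  /\
  (forall S0 : relation B -> Prop, is_basis S S0 ->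
     ((S (fun b b' => exists b0, f (g b0) = b /\ b0 = b') /\
       (forall s, S s -> R (star_rel f g s)))
      <->
      (S (fun b b' => exists b0, f (g b0) = b /\ b0 = b') /\
       (forall s, S0 s -> R (star_rel f g s))))).
Proof.
  intros [_ [R_comp R_down]] [S_id [S_comp _]] _.
  split.
  - split.
    + intros [Hg [Hunit Hcounit]].
      split; [exact Hcounit |].
      exact (star_rel_closed_of_monotone R_down R_comp Hg Hunit).
    + intros [Hcounit Hstar].
      split; [| split; [| exact Hcounit]].
      * exact (monotone_of_star_rel_closed R_down S_comp Hcounit Hstar).
      * exact (unit_rel_of_star_rel_closed R_down S_id Hstar).
  - intros S0 HS0. split.
    + intros [Hcounit Hstar].
      split; [exact Hcounit |].
      intros s Hs. exact (Hstar s (proj1 HS0 s Hs)).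
    + intros [Hcounit Hstar0].
      split; [exact Hcounit |].
      exact (star_rel_closed_of_basis R_down HS0 Hstar0).
Qed.
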